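(* In the coalition formation game above, every improvement path under the Marginal Utility order is finite. That is, there is no infinite sequence of profiles $s^{(0)},s^{(1)},s^{(2)},\dots$ such that for each $k$, $s^{(k+1)}$ is obtained from $s^{(k)}$ by a single UAV $j$ switching from task $s^{(k)}_j$ to a task $t\ne s^{(k)}_j$ with $C_t(s^{(k)})\cup\{j\}\succ_j C_{s^{(k)}_j}(s^{(k)})$. In particular, any procedure (such as the paper's MUCFC-CFG algorithm) that changes the partition only by such strictly improving unilateral switches makes finitely many changes, and if it stops only when no such switch exists, it terminates at a stable coalition partition.
   Context: $\mathcal M=\{1,\dots,M\}$ is a finite set of tasks and $\mathcal N=\{1,\dots,N\}$ a finite set of UAVs; a profile $s=(s_1,\dots,s_N)\in\mathcal M^N$ assigns task $s_j$ to UAV $j$ and induces coalitions $C_i(s)=\{j: s_j=i\}$. For each task $i$, $V_i$ is a real-valued characteristic function on subsets of $\mathcal N$ with $V_i(\emptyset)=0$. Shapley value of $j\in C$ for a coalition $C$ executing task $i$: $u_j(C)=\sum_{C'\subseteq C\setminus\{j\}}\frac{|C'|!(|C|-|C'|-1)!}{|C|!}[V_i(C'\cup\{j\})-V_i(C')]$. Marginal Utility order: for $j\in C$, $\mathrm{MU}_j(C)=u_j(C)+\sum_{g\in C\setminus\{j\}}[u_g(C)-u_g(C\setminus\{j\})]$ (Shapley values computed w.r.t. the task executed by $C$), and $C_k\succ_j C_l$ iff $\mathrm{MU}_j(C_k)>\mathrm{MU}_j(C_l)$. A partition is stable if no UAV $j$ and task $t\ne s_j$ satisfy $C_t\cup\{j\}\succ_j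 C_{s_j}$. *)

From HB Require Import structures.
From mathcomp Require Import all_boot all_order all_algebra.
Set Implicit Arguments. Unset Strict Implicit. Unset Printing Implicit Defensive.
Import Order.TTheory GRing.Theory Num.Theory.
Local Open Scope ring_scope.

(* Tasks are 'I_M, UAVs are 'I_N; a profile assigns a task to each UAV. *)
Definition profile (M N : nat) := {ffun 'I_N -> 'I_M}.

Definition coalition (M N : nat) (s : profile M N) (i : 'I_M) : {set 'I_N} :=
  [set j | s j == i].

Definition shapley (R : realFieldType) (N : nat) (v : {set 'I_N} -> R)
    (C : {set 'I_N}) (j : 'I_N) : R :=
  \sum_(C' in powerset (C :\ j))
     (((#|C'|)`! * (#|C| - #|C'| - 1)`!)%:R / ((#|C|)`!)%:R)
       * (v (C' :|: [set j]) - v C').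

Definition MU (R : realFieldType) (N : nat) (v : {set 'I_N} -> R)
    (j : 'I_N) (C : {set 'I_N}) : R :=
  shapley v C j +
  \sum_(g in C :\ j) (shapley v C g - shapley v (C :\ j) g).

Definition improving_step (R : realFieldType) (M N : nat)
    (V : 'I_M -> {set 'I_N} -> R) (s s' : profile M N) : Prop :=
  exists (j : 'I_N) (t : 'I_M),
    [/\ t != s j,
        MU (V (s j)) j (coalition s (s j)) < MU (V t) j (coalition s t :|: [set j])
      & s' = [ffun k => if k == j then t else s k]].

(* The game is an exact potential game.  Writing W(C) for the total Shapley
   payoff of C, regrouping the sum defining MU gives MU_j(C) = W(C) - W(C \ j),
   so a switch of UAV j from C_a to C_t raises the potential sum_i W_i(C_i) by
   exactly MU_j(C_t + j) - MU_j(C_a) > 0.  A strictly increasing potential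
   never revisits a profile, and there are finitely many profiles. *)
From mathcomp Require Import all_boot all_order all_algebra.
From mathcomp Require Import lra.
Import Order.TTheory GRing.Theory Num.Theory.
Set Implicit Arguments. Unset Strict Implicit.
Local Open Scope ring_scope.

Lemma finite_no_strict_ascent (d : Order.disp_t) (T : finType) (U : porderType d)
    (phi : T -> U) (f : nat -> T) :
  ~ (forall k, (phi (f k) < phi (f k.+1))%O).
Proof.
move=> ascent.
have incr : {homo phi \o f : i j / (i < j)%N >-> (i < j)%O}.
  by apply: homo_ltn => // y x z; apply: lt_trans.
pose g (i : 'I_#|T|.+1) := f i.
have g_inj : injective g.
  move=> i j eq_g; apply/val_inj.
  by case: (ltngtP i j) => // /incr /=; rewrite /g in eq_g; rewrite eq_g ltxx.
by have := leq_card g g_inj; rewrite card_ord ltnn.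
Qed.

Section PotentialGame.

Variable R : realFieldType.

Definition shapley_total (N : nat) (v : {set 'I_N} -> R) (C : {set 'I_N}) : R :=
  \sum_(g in C) shapley v C g.

Lemma MU_shapley_total (N : nat) (v : {set 'I_N} -> R) (j : 'I_N) (C : {set 'I_N}) :
  j \in C -> MU v j C = shapley_total v C - shapley_total v (C :\ j).
Proof.
move=> jC; rewrite /MU /shapley_total sumrB [in RHS](bigD1 j) //=.
have -> : \sum_(g in C | g != j) shapley v C g = \sum_(g in C :\ j) shapley v C g.
  by apply: eq_bigl => g; rewrite !inE andbC.
lra.
Qed.

Definition potential (M N : nat) (V : 'I_M -> {set 'I_N} -> R) (s : profile M N) : R :=
  \sum_i shapley_total (V i) (coalition s i).

Variables (M N : nat) (s : profile M N) (j : 'I_N) (t : 'I_M).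

Definition switch : profile M N := [ffun k => if k == j then t else s k].

Lemma coalition_switch i :
  coalition switch i = if i == t then j |: coalition s i else coalition s i :\ j.
Proof.
apply/setP => k; case: (eqVneq i t) => [->|it]; rewrite !inE ffunE;
  by case: (eqVneq k j) => [->|_] //=; rewrite ?eqxx // eq_sym (negbTE it).
Qed.

Lemma coalition_switch_other i : i != t -> i != s j -> coalition switch i = coalition s i.
Proof.
move=> it ij; rewrite coalition_switch (negbTE it).
by apply/setDidPl; rewrite disjoint_sym disjoints1 inE eq_sym.
Qed.

Lemma potential_switch (V : 'I_M -> {set 'I_N} -> R) : t != s j ->
  potential V switch - potential V s =
  MU (V t) j (coalition s t :|: [set j]) - MU (V (s j)) j (coalition s (s j)).
Proof.
move=> ts; set a := s j.
have jCa : j \in coalition s a by rewrite inE.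
have jCt : j \notin coalition s t by rewrite inE eq_sym.
rewrite [_ :|: [set j]]setUC MU_shapley_total ?setU11 // MU_shapley_total //.
rewrite setU1K // /potential (bigD1 t) // [X in _ - X](bigD1 t) //=.
rewrite (bigD1 a) 1?eq_sym //= [X in _ - (_ + X)](bigD1 a) 1?eq_sym //=.
under eq_bigr => i /andP [it ia] do rewrite coalition_switch_other //.
by rewrite !coalition_switch eqxx eq_sym (negbTE ts); lra.
Qed.

End PotentialGame.

Lemma improving_step_potential (R : realFieldType) (M N : nat)
    (V : 'I_M -> {set 'I_N} -> R) (s s' : profile M N) :
  improving_step V s s' -> potential V s < potential V s'.
Proof.
case=> j [t] [ts improve ->]; rewrite -subr_gt0 potential_switch //.
by rewrite subr_gt0.
Qed.

Theorem theorem4p6 (R : realFieldType) (M N : nat)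
    (V : 'I_M -> {set 'I_N} -> R) (hV0 : forall i, V i set0 = 0) :
  ~ exists f : nat -> profile M N, forall k : nat, improving_step V (f k) (f k.+1).
Proof.
case=> f improving; apply: (finite_no_strict_ascent (phi := potential V) (f := f)) => k.
exact: improving_step_potential.
Qed.
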